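(* Let $n\ge 3$ and let $\mathcal{H}$ be the associating hypergraph on $M(D_n,2)$. Then the covering number is $\rho(\mathcal{H})=n+\lceil n/3\rceil$.
   Context: $D_n=\langle x,y\mid x^n=y^2=1,\ xy=yx^{-1}\rangle$. $M(D_n,2)=\{(g,\alpha): g\in D_n,\ \alpha\in\mathbb{Z}_2\}$ with $(g_1,\alpha_1)\circ(g_2,\alpha_2)=(g_1^{1-\alpha_2} g_2^{(-1)^{\alpha_1}} g_1^{\alpha_2},\ \alpha_1+\alpha_2)$. The associating hypergraph $\mathcal{H}$ has vertex set $M(D_n,2)$ ($4n$ vertices), and a 3-element set $\{a,b,c\}$ of distinct elements is a hyperedge when $(a\circ b)\circ c=a\circ(b\circ c)$. The covering number $\rho(\mathcal{H})$ is the minimum number of hyperedges whose union is the whole vertex set. *)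

From mathcomp Require Import all_boot all_order all_algebra.
Set Implicit Arguments. Unset Strict Implicit. Unset Printing Implicit Defensive.
Import GRing.Theory.
Local Open Scope ring_scope.

(* Concrete model of D_n = < x, y | x^n = y^2 = 1, xy = yx^{-1} > (n >= 2):
   the pair (k, s) : 'Z_n * bool stands for x^k y^s. *)
Definition dih (n : nat) : finType := ('Z_n * bool)%type.

Definition dmul (n : nat) (g h : dih n) : dih n :=
  let: (a, s) := g in let: (b, t) := h in
  ((a + (if s then - b else b))%R, addb s t).

Definition dinv (n : nat) (g : dih n) : dih n :=
  let: (a, s) := g in if s then (a, s) else ((- a)%R, s).

Definition dunit (n : nat) : dih n := (0%R, false).

Definition dpow_sign (n : nat) (g : dih n) (alpha : bool) : dih n :=
  if alpha then dinv g else g.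

Definition dpow01 (n : nat) (g : dih n) (e : bool) : dih n :=
  if e then g else dunit n.

(* M(D_n,2) with elements (g, alpha), alpha in Z_2 (encoded as bool). *)
Definition MD (n : nat) : finType := (dih n * bool)%type.

(* (g1,a1) o (g2,a2) = (g1^{1-a2} g2^{(-1)^a1} g1^{a2}, a1 + a2) *)
Definition mop (n : nat) (u v : MD n) : MD n :=
  let: (g1, a1) := u in let: (g2, a2) := v in
  (dmul (dmul (dpow01 g1 (~~ a2)) (dpow_sign g2 a1)) (dpow01 g1 a2),
   addb a1 a2).

Definition assoc_edge (n : nat) (E : {set MD n}) : Prop :=
  exists a b c : MD n,
    [/\ a != b, b != c, a != c, E = [set a; b; c]
      & mop (mop a b) c = mop a (mop b c)].

Definition assoc_edge_cover (n : nat) (F : {set {set MD n}}) : Prop :=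
  (forall E, E \in F -> @assoc_edge n E) /\ cover F = [set: MD n].

Definition covering_number_is (n : nat) (m : nat) : Prop :=
  (exists F : {set {set MD n}}, assoc_edge_cover F /\ #|F| = m) /\
  (forall F : {set {set MD n}}, assoc_edge_cover F -> (m <= #|F|)%N).

(* Every hyperedge has three vertices, so a cover of the 4n vertices needs at
   least ceil(4n/3) = n + ceil(n/3) hyperedges.  Conversely, sort the elements
   (g, alpha) into four classes by alpha and by whether g is a reflection.  If
   a and b lie in the same class and c lies in that class too, or one of a, c
   lies in the class R of the pairs (x^k, 0), then (a o b) o c = a o (b o c) by
   direct computation; hence any three distinct elements whose members outside
   R share a class form a hyperedge.  Listing the vertices class by class, with
   R second, the triples of consecutive vertices starting at positions
   0, 3, 6, ... (the last one pushed back to end at position 4n - 1) are such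
   hyperedges and cover everything with ceil(4n/3) of them. *)

From mathcomp Require Import all_boot all_order all_algebra.
From mathcomp Require Import zify ring.
Set Implicit Arguments. Unset Strict Implicit. Unset Printing Implicit Defensive.
Import GRing.Theory.

Lemma leq_card_cover_uniform (T : finType) (F : {set {set T}}) (k : nat) :
  {in F, forall E : {set T}, #|E| <= k} -> #|cover F| <= #|F| * k.
Proof.
move=> Fk; have [cover_le _] := leq_card_cover F.
by rewrite -sum_nat_const (leq_trans cover_le) // leq_sum.
Qed.

Lemma card_set3_le (T : finType) (a b c : T) : #|[set a; b; c]| <= 3.
Proof.
rewrite (leq_trans (leq_card_setU _ _)) // cards2 cards1; by case: (a != b).
Qed.

Section Windows.

Variables (T : finType) (N : nat) (f : nat -> T).

Definition window (t : nat) : {set T} := [set f t; f t.+1; f t.+2].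

Definition window_start (j : nat) : nat := minn (3 * j) (N - 3).

Definition windows : {set {set T}} :=
  [set window (window_start j) | j : 'I_((N + 2) %/ 3)].

Lemma card_windows : #|windows| <= (N + 2) %/ 3.
Proof. by rewrite (leq_trans (leq_imset_card _ _)) // card_ord. Qed.

Lemma cover_windows :
  3 <= N -> (forall x, exists2 p, p < N & f p = x) -> cover windows = [set: T].
Proof.
move=> N_ge3 f_onto; apply/setP => x; rewrite inE; apply/bigcupP.
have [p p_lt <-] := f_onto x.
have j_lt : minn (p %/ 3) ((N + 2) %/ 3 - 1) < (N + 2) %/ 3 by lia.
exists (window (window_start (Ordinal j_lt))); first exact: imset_f.
set t := window_start _.
have : p = t \/ p = t.+1 \/ p = t.+2 by rewrite /t /window_start /=; lia.
by case=> [|[]] ->; rewrite !inE eqxx ?orbT.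
Qed.

End Windows.

Section Associativity.

Variable n : nat.
Implicit Types x y z : MD n.

(* The class of (x^k y^s, alpha) is (s, alpha); R is the class (false, false). *)
Definition mclass x : bool * bool := (x.1.2, x.2).

Definition mixable (c d : bool * bool) : bool :=
  [|| c == d, c == (false, false) | d == (false, false)].

Lemma mixableC c d : mixable c d = mixable d c.
Proof. by rewrite /mixable eq_sym [(c == _) || _]orbC. Qed.

Lemma mixable_pigeonhole c d e :
  mixable c d -> mixable d e -> mixable c e -> [|| c == d, d == e | c == e].
Proof. by case: c d e => [[] []] [[] []] [[] []]. Qed.

Lemma mop_assoc x y z :
  mclass x = mclass y -> mixable (mclass x) (mclass z) ->
  mop (mop x y) z = mop x (mop y z).
Proof.
case: x y z => [[a s] al] [[b t] be] [[c u] ga] [-> ->].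
by case: t be u ga => [] [] [] []; rewrite /mixable //= => _;
  rewrite /mop /dmul /dinv /dpow01 /dpow_sign /dunit /=; congr (_, _, _); ring.
Qed.

Lemma assoc_edge_ordered x y z :
  x != y -> y != z -> x != z -> mclass x = mclass y ->
  mixable (mclass x) (mclass z) -> assoc_edge [set x; y; z].
Proof. by move=> *; exists x, y, z; split=> //; apply: mop_assoc. Qed.

Lemma assoc_edge_mixable x y z :
  x != y -> y != z -> x != z ->
  mixable (mclass x) (mclass y) -> mixable (mclass y) (mclass z) ->
  mixable (mclass x) (mclass z) -> assoc_edge [set x; y; z].
Proof.
move=> xy yz xz mxy myz mxz.
case/or3P: (mixable_pigeonhole mxy myz mxz) => /eqP eq_cl.
- exact: assoc_edge_ordered.
- have -> : [set x; y; z] = [set y; z; x].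
    by apply/setP => v; rewrite !inE; do 3 case: (v == _).
  by apply: assoc_edge_ordered; rewrite // 1?eq_sym // mixableC.
- have -> : [set x; y; z] = [set x; z; y].
    by apply/setP => v; rewrite !inE; do 3 case: (v == _).
  by apply: assoc_edge_ordered; rewrite // eq_sym.
Qed.

End Associativity.

Section Enumeration.

Variable n : nat.
Hypothesis n_ge3 : 3 <= n.

(* The class boundary at 3n is the only one between two classes other than R;
   being a multiple of 3, it is never straddled by an aligned window. *)
Definition class_at (p : nat) : bool * bool :=
  if p < n then (false, true) else if p < n.*2 then (false, false)
  else if p < 3 * n then (true, false) else (true, true).

Definition block_start (c : bool * bool) : nat :=
  match c with
  | (false, true) => 0 | (false, false) => n
  | (true, false) => n.*2 | (true, true) => 3 * n
  end.

Definition vertex_at (p : nat) : MD n :=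
  let c := class_at p in (inZp (p - block_start c), c.1, c.2).

Definition position (x : MD n) : nat := block_start (mclass x) + x.1.1.

Lemma mclass_vertex_at p : mclass (vertex_at p) = class_at p.
Proof. by rewrite /mclass /vertex_at; case: (class_at p). Qed.

Lemma val_Zn (k : 'Z_n) : k < n.
Proof. by rewrite -[X in _ < X](@Zp_cast n) ?ltn_ord //; lia. Qed.

Lemma position_lt x : position x < 4 * n.
Proof.
by case: x => [[k [] []]] /=; rewrite /position /=; have := val_Zn k; lia.
Qed.

Lemma vertex_atK p : p < 4 * n -> position (vertex_at p) = p.
Proof.
move=> p_lt; rewrite /position mclass_vertex_at /= Zp_cast; last lia.
by rewrite /class_at; repeat case: ltnP => ? //=; rewrite modn_small; lia.
Qed.

Lemma positionK : cancel position vertex_at.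
Proof.
case=> [[k s] al]; have := val_Zn k; rewrite /vertex_at /class_at /position.
by case: s al => [] [] /= k_lt; repeat case: ltnP => ? //=; try lia;
  rewrite addKn valZpK.
Qed.

Lemma eq_vertex_at p q :
  p < 4 * n -> q < 4 * n -> (vertex_at p == vertex_at q) = (p == q).
Proof.
move=> p_lt q_lt; apply/eqP/eqP => [eq_pq|-> //].
by rewrite -(vertex_atK p_lt) -(vertex_atK q_lt) eq_pq.
Qed.

Lemma mixable_window j (t := window_start (4 * n) j) :
  [&& mixable (class_at t) (class_at t.+1),
      mixable (class_at t.+1) (class_at t.+2) &
      mixable (class_at t) (class_at t.+2)].
Proof.
rewrite /t /window_start /class_at.
by repeat case: ltnP => ? //; lia.
Qed.

Lemma assoc_edge_window j :
  assoc_edge (window vertex_at (window_start (4 * n) j)).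
Proof.
have t_lt : window_start (4 * n) j < 4 * n - 2 by rewrite /window_start; lia.
case/and3P: (mixable_window j); rewrite -!mclass_vertex_at.
by apply: assoc_edge_mixable; rewrite eq_vertex_at //; lia.
Qed.

End Enumeration.

Lemma card_MD n : 2 <= n -> #|MD n| = 4 * n.
Proof.
by move=> n_ge2; rewrite /MD /dih !card_prod card_bool card_ord Zp_cast //; lia.
Qed.

Lemma card_assoc_edge_cover n (F : {set {set MD n}}) :
  2 <= n -> assoc_edge_cover F -> 4 * n <= #|F| * 3.
Proof.
move=> n_ge2 [F_edges F_cover]; rewrite -card_MD // -cardsT -F_cover.
by apply: leq_card_cover_uniform => _ /F_edges [x [y [z [_ _ _ -> _]]]];
  exact: card_set3_le.
Qed.

Theorem mainTheorem7 (n : nat) (hn : (3 <= n)%N) :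
  covering_number_is n (n + (n + 2) %/ 3)%N.
Proof.
have lower (F : {set {set MD n}}) :
    assoc_edge_cover F -> n + (n + 2) %/ 3 <= #|F|.
  by move=> F_cover; have := card_assoc_edge_cover (ltnW hn) F_cover; lia.
split; last exact: lower.
set F := windows (4 * n) (vertex_at n).
have F_cover : assoc_edge_cover F.
  split; first by move=> _ /imsetP [j _ ->]; exact: assoc_edge_window.
  apply: cover_windows => [|x]; first lia.
  by exists (position x); [exact: position_lt | exact: positionK].
exists F; split=> //.
have := card_windows (4 * n) (vertex_at n); rewrite -/F.
by have := lower F F_cover; lia.
Qed.
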